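(* Let $t$ and $i$ be integers with $t \geq 1$ and $0 \leq i < t$, and suppose there exists a Hadamard matrix of order $4t+4i$. Then there exists a binary code (not necessarily linear) $C \subseteq \{0,1\}^{4t}$ of length $4t$ with exactly $8t+8i$ codewords and minimum distance at least $2t-2i$, i.e. any two distinct codewords of $C$ are at Hamming distance at least $2t-2i$.
   Context: A Hadamard matrix of order $n$ is an $n \times n$ matrix $H$ with entries in $\{\pm 1\}$ satisfying $HH^{\top} = nI_n$. A binary code of length $m$ is a subset of $\{0,1\}^m$; its minimum distance is the minimum Hamming distance between two distinct codewords. *)

From mathcomp Require Import all_boot all_order all_algebra.
Set Implicit Arguments. Unset Strict Implicit. Unset Printing Implicit Defensive.
Import GRing.Theory Num.Theory.

Definition is_hadamard (n : nat) (H : 'M[int]_n) : Prop :=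
  (forall i j, H i j = 1%R \/ H i j = (-1)%R) /\ (H *m H^T = (n%:R)%:M)%R.

Definition word (m : nat) := m.-tuple bool.

Definition hamming (m : nat) (x y : word m) : nat :=
  #|[set i : 'I_m | tnth x i != tnth y i]|.

Definition min_dist_ge (m : nat) (C : {set word m}) (d : nat) : Prop :=
  forall x y, x \in C -> y \in C -> x != y -> d <= hamming x y.

From mathcomp Require Import all_boot all_order all_algebra zify.
Import GRing.Theory Num.Theory.
Set Implicit Arguments. Unset Strict Implicit.

(* Read the 2n rows of H and -H as binary words (+1 |-> 0, -1 |-> 1).  Over
   {+1,-1}, the inner product of two words of length n equals
   n - 2 * (their Hamming distance), so orthogonality of the rows of H forces
   two distinct words to be at distance n/2 (or n, for a row of H against the
   same row of -H).  Deleting 4i of the n = 4t + 4i coordinates costs at most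
   4i in distance, leaving 2t - 2i > 0; in particular the 2n words stay
   distinct. *)

Lemma hammingE m (x y : word m) :
  hamming x y = \sum_(k < m) (tnth x k != tnth y k).
Proof. by rewrite -big_mkcond /= sum1_card /hamming cardsE. Qed.

Lemma hamming_refl m (x : word m) : hamming x x = 0.
Proof. by rewrite hammingE big1 // => k _; rewrite eqxx. Qed.

Definition take_word m k (x : word (m + k)) : word m :=
  [tuple tnth x (lshift k j) | j < m].

Lemma hamming_take_word m k (x y : word (m + k)) :
  hamming x y <= hamming (take_word x) (take_word y) + k.
Proof.
rewrite !hammingE big_split_ord leq_add //.
  by apply/eq_leq/eq_bigr => j _; rewrite !tnth_mktuple.
by rewrite -[leqRHS]card_ord -sum1_card leq_sum // => j _; apply: leq_b1.
Qed.

Lemma hamming_ge_injective m (T : eqType) (f : T -> word m) d : 0 < d ->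
  (forall p q, p != q -> d <= hamming (f p) (f q)) -> injective f.
Proof.
move=> d_gt0 far p q fpq; apply/eqP/negPn/negP => /far.
by rewrite fpq hamming_refl leqNgt d_gt0.
Qed.

Lemma min_dist_ge_imset m (T : finType) (f : T -> word m) (A : {set T}) d :
  (forall p q, p != q -> d <= hamming (f p) (f q)) -> min_dist_ge (f @: A) d.
Proof.
move=> far _ _ /imsetP[p _ ->] /imsetP[q _ ->] fpq.
by apply: far; apply: contraNneq fpq => ->.
Qed.

Local Open Scope ring_scope.

Definition sgnb (b : bool) : int := (-1) ^+ b.

Lemma sgnb_mul (a b : bool) : sgnb a * sgnb b = 1 - (a != b)%:R *+ 2.
Proof. by case: a; case: b. Qed.

Lemma sum_sgnb_mul m (x y : word m) :
  \sum_(k < m) sgnb (tnth x k) * sgnb (tnth y k) = m%:Z - 2 * (hamming x y)%:Z.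
Proof.
under eq_bigr do rewrite sgnb_mul.
by rewrite sumrB sumr_const card_ord sumrMnl -natr_sum -hammingE !natz -mulr_natl.
Qed.

Lemma sgnb_sign_bit (x : int) b :
  x = 1 \/ x = -1 -> sgnb ((x != 1) (+) b) = sgnb b * x.
Proof. by case=> ->; case: b. Qed.

Definition hadamard_word n (H : 'M[int]_n) (p : 'I_n * bool) : word n :=
  [tuple (H p.1 k != 1) (+) p.2 | k < n].

Lemma hamming_hadamard_word n (H : 'M[int]_n) p q : is_hadamard H -> p != q ->
  (n <= 2 * hamming (hadamard_word H p) (hadamard_word H q))%N.
Proof.
case: p q => r b [s c] [H_pm HHt] neq_rbsc.
have row_dot : \sum_(k < n) sgnb (tnth (hadamard_word H (r, b)) k)
    * sgnb (tnth (hadamard_word H (s, c)) k) = sgnb b * sgnb c * (n%:R *+ (r == s)).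
  have := congr1 (fun M : 'M_n => M r s) HHt; rewrite !mxE => <-.
  rewrite mulr_sumr; apply: eq_bigr => k _.
  by rewrite !tnth_mktuple !sgnb_sign_bit // mxE mulrACA.
rewrite sum_sgnb_mul in row_dot; move: (hamming _ _) row_dot => h row_dot.
case: (eqVneq r s) row_dot neq_rbsc => [<- | _] row_dot neq_rbsc.
  have neq_bc : b != c by apply: contraNneq neq_rbsc => ->.
  have sgnb_bc : sgnb b * sgnb c = -1.
    by case: b c neq_bc {row_dot neq_rbsc} => [] [].
  have antipodal : n%:Z - 2 * h%:Z = - n%:Z.
    by rewrite row_dot sgnb_bc mulr1n natz mulN1r.
  lia.
have orthogonal : n%:Z - 2 * h%:Z = 0 by rewrite row_dot mulr0n mulr0.
lia.
Qed.

Local Close Scope ring_scope.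

Section HadamardCode.

Variables (m k : nat) (H : 'M[int]_(m + k)).
Hypothesis H_had : is_hadamard H.

Definition hadamard_code_word (p : 'I_(m + k) * bool) : word m :=
  take_word (hadamard_word H p).

Definition hadamard_code : {set word m} := hadamard_code_word @: setT.

Lemma hamming_hadamard_code_word p q : p != q ->
  m + k <= 2 * (hamming (hadamard_code_word p) (hadamard_code_word q) + k).
Proof.
move=> neq_pq; apply: leq_trans (hamming_hadamard_word H_had neq_pq) _.
by rewrite leq_mul2l hamming_take_word orbT.
Qed.

Lemma hadamard_code_min_dist d : 2 * d + k <= m -> min_dist_ge hadamard_code d.
Proof.
move=> d_le; apply: min_dist_ge_imset => p q /hamming_hadamard_code_word; lia.
Qed.

Lemma card_hadamard_code : k < m -> #|hadamard_code| = 2 * (m + k).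
Proof.
move=> lt_km; rewrite card_imset.
  by rewrite cardsT card_prod card_ord card_bool mulnC.
apply: (hamming_ge_injective (d := 1)) => // p q /hamming_hadamard_code_word.
lia.
Qed.

End HadamardCode.

Theorem theorem2 (t i : nat) (ht : 1 <= t) (hi : i < t) :
  (exists H : 'M[int]_(4 * t + 4 * i), is_hadamard H) ->
  exists C : {set word (4 * t)},
    #|C| = 8 * t + 8 * i /\ min_dist_ge C (2 * t - 2 * i).
Proof.
case=> H H_had; exists (hadamard_code H); split.
  by rewrite card_hadamard_code //; lia.
by apply: (hadamard_code_min_dist (d := 2 * t - 2 * i) H_had); lia.
Qed.
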